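(* Let $p$ be a prime, and let $k,n,m,n_0,m_0$ be nonnegative integers such that $k\ge 1$ and $0\le n_0,m_0\le p-1$. If $p\ge 5$, then $$\binom{np^k+n_0}{mp^k+m_0}\equiv \binom{np^{\lfloor (k-1)/3\rfloor}}{mp^{\lfloor (k-1)/3\rfloor}}\binom{n_0}{m_0}\pmod{p^k}.$$ Furthermore, for $p=2$, $$\binom{n2^k+n_0}{m2^k+m_0}\equiv \binom{n2^{\lfloor k/2\rfloor}}{m2^{\lfloor k/2\rfloor}}\binom{n_0}{m_0}\pmod{2^k},$$ and for $p=3$, $$\binom{n3^k+n_0}{m3^k+m_0}\equiv \binom{n3^{\lfloor (k-1)/2\rfloor}}{m3^{\lfloor (k-1)/2\rfloor}}\binom{n_0}{m_0}\pmod{3^k}.$$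
   Context: $\lfloor a\rfloor$ denotes the greatest integer less than or equal to $a$. Binomial coefficients use the conventions $\binom{0}{0}=1$ and $\binom{l}{r}=0$ if $l<r$. *)

From mathcomp Require Import all_boot.

(* Write P = p^r and U(y) = prod_(0 <= i < P, ~ p | i) (y + i).  Cancelling the
   multiples of p in the factorials gives
     C(n p^r, m p^r) * prod_(b < m) U(b P)
       = C(n p^(r-1), m p^(r-1)) * prod_(b < m) U((n - m) P + b P),
   so C(n p^r, m p^r) = C(n p^(r-1), m p^(r-1)) modulo every power of p modulo
   which U(y) = U(0) for all multiples y of P.  Pairing i with P - i gives
   U(y)^2 = prod (i (P - i) + y (y + P)), and P^2 | y (y + P); hence U(y)^2 = U(0)^2
   (mod P^2), so U(y) = U(0) modulo p^(2r) for odd p and modulo 2^(2r-1) for p = 2.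
   For p >= 5 the coefficient of y (y + P) in that product,
   T = sum_i prod_(j <> i) j (P - j), is divisible by P as well: reindexing by
   i -> 2i shows T = 4^-1 T modulo P, so P divides 3 T.  This improves the congruence to p^(3r).  Descending from r = k
   to the stated exponent and splitting off C(n0, m0) with Vandermonde's identity
   gives the theorem. *)

From mathcomp Require Import all_boot.
From mathcomp Require Import zify ring.

Set Implicit Arguments.
Unset Strict Implicit.

Lemma eq_modn_sum (I : Type) (r : seq I) (P : pred I) (F G : I -> nat) d :
  (forall i, P i -> F i = G i %[mod d]) ->
  \sum_(i <- r | P i) F i = \sum_(i <- r | P i) G i %[mod d].
Proof.
move=> FG; apply: (big_ind2 (fun x y => x = y %[mod d])) => // x1 x2 y1 y2 e1 e2.
by rewrite -modnDm e1 e2 modnDm.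
Qed.

Lemma eq_modn_prod (I : Type) (r : seq I) (P : pred I) (F G : I -> nat) d :
  (forall i, P i -> F i = G i %[mod d]) ->
  \prod_(i <- r | P i) F i = \prod_(i <- r | P i) G i %[mod d].
Proof.
move=> FG; apply: (big_ind2 (fun x y => x = y %[mod d])) => // x1 x2 y1 y2 e1 e2.
by rewrite -modnMm e1 e2 modnMm.
Qed.

Lemma eq_modn_dvd a b q d : a = b %[mod q] -> d %| q -> a = b %[mod d].
Proof. by move=> ab dq; rewrite -(modn_dvdm a dq) ab modn_dvdm. Qed.

Lemma modn_addr_dvd a x d : d %| x -> a + x = a %[mod d].
Proof. by case/dvdnP=> t ->; rewrite addnC modnMDl. Qed.

Lemma eq_modn_mulr_coprime a b u q :
  coprime u q -> a * u = b * u %[mod q] -> a = b %[mod q].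
Proof.
move=> cu; wlog le_ab : a b / a <= b => [W|].
  by case: (leqP a b) => [/W//|/ltnW le_ba /esym/(W _ _ le_ba)].
move=> e; apply/esym/eqP; rewrite eqn_mod_dvd //.
have : q %| b * u - a * u by rewrite -eqn_mod_dvd ?leq_mul2r ?le_ab ?orbT // e.
by rewrite -mulnBl Gauss_dvdl // coprime_sym.
Qed.

Lemma coprime_pexp_ndvd p x e : prime p -> ~~ (p %| x) -> coprime x (p ^ e).
Proof. by move=> pp px; apply: coprimeXr; rewrite coprime_sym prime_coprime. Qed.

Lemma eq_modn_sqr_odd p e a b : prime p -> 2 < p -> ~~ (p %| b) ->
  a = b %[mod p] -> a ^ 2 = b ^ 2 %[mod p ^ e] -> a = b %[mod p ^ e].
Proof.
move=> pp p_gt2 p_ndvd_b eq_ab.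
have p_ndvd2 : ~~ (p %| 2).
  by apply/negP => /(dvdn_leq (isT : 0 < 2)); rewrite leqNgt p_gt2.
have {p_ndvd_b} p_ndvd_ab : ~~ (p %| a + b).
  rewrite /dvdn -modnDml eq_ab modnDml addnn -mul2n -/(dvdn _ _) Euclid_dvdM //.
  by rewrite negb_or p_ndvd_b p_ndvd2.
wlog le_ba : a b eq_ab p_ndvd_ab / b <= a => [W|].
  case: (leqP b a) => [/W|/ltnW le_ab]; first exact.
  by move/esym=> sq; apply/esym/W; rewrite // addnC.
move=> sq; apply/eqP; rewrite eqn_mod_dvd //.
have : p ^ e %| a ^ 2 - b ^ 2 by rewrite -eqn_mod_dvd ?leq_exp2r // sq.
by rewrite subn_sqr Gauss_dvdl // coprime_sym coprime_pexp_ndvd.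
Qed.

Lemma eq_modn_sqr_two e a b : odd b ->
  a = b %[mod 4] -> a ^ 2 = b ^ 2 %[mod 2 ^ e.+1] -> a = b %[mod 2 ^ e].
Proof.
move=> odd_b eq_ab.
have odd_a : odd a by rewrite -(odd_mod _ (erefl : odd 4 = false)) eq_ab odd_mod.
wlog le_ba : a b eq_ab odd_a odd_b / b <= a => [W|].
  case: (leqP b a) => [/W|/ltnW le_ab]; first exact.
  by move/esym=> sq; apply/esym/W.
move=> sq; apply/eqP; rewrite eqn_mod_dvd //.
have : 2 ^ e.+1 %| a ^ 2 - b ^ 2 by rewrite -eqn_mod_dvd ?leq_exp2r // sq.
have ab_half : a + b = 2 * ((a + b) %/ 4 * 2 + 1).
  have ab_mod4 : (a + b) %% 4 = 2.
    have bb : b + b = b %/ 2 * 4 + 2.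
      by rewrite {1 2}(divn_eq b 2) modn2 odd_b /=; ring.
    by rewrite -modnDml eq_ab modnDml bb modnMDl.
  by rewrite {1}(divn_eq (a + b) 4) ab_mod4; ring.
rewrite subn_sqr ab_half mulnCA expnS dvdn_pmul2l // Gauss_dvdl //.
by rewrite coprime_sym coprimeXr // coprimen2 addn1 /= oddM andbF.
Qed.

Lemma dvdn_bin_coprime q A M : q %| A -> coprime M q -> q %| 'C(A, M).
Proof.
case: M => [|M] qA; first by rewrite /coprime gcd0n => /eqP->; rewrite dvd1n.
move=> cMq; have : q %| M.+1 * 'C(A, M.+1) by rewrite -mul_bin_diag dvdn_mulr.
by rewrite Gauss_dvdr // coprime_sym.
Qed.

Lemma ndvdn_addn_subn p B a j : p %| B -> a < p -> j < p -> j <= B + a -> j != a ->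
  ~~ (p %| B + a - j).
Proof.
move=> pB ap jp jBa ne_ja; apply/negP.
have [le_ja|lt_aj] := leqP j a.
  rewrite -addnBA // dvdn_addr // => /dvdn_leq.
  rewrite subn_gt0 ltn_neqAle ne_ja le_ja leqNgt => /(_ isT)/negP; apply.
  exact: leq_ltn_trans (leq_subr _ _) ap.
have le_jaB : j - a <= B by rewrite leq_subLR addnC.
rewrite -subnBA ?(ltnW lt_aj) // dvdn_subr // => /dvdn_leq.
rewrite subn_gt0 lt_aj leqNgt => /(_ isT)/negP; apply.
exact: leq_ltn_trans (leq_subr _ _) jp.
Qed.

Lemma prod_addn_expansion (I : eqType) (s : seq I) (c : I -> nat) z : uniq s ->
  exists W, \prod_(i <- s) (c i + z) =
    \prod_(i <- s) c i + z * \sum_(i <- s) \prod_(j <- s | j != i) c j + z ^ 2 * W.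
Proof.
elim: s => [|x s IH] /=; first by exists 0; rewrite !big_nil !muln0.
case/andP=> xNs /IH[W HW].
have drop_x : \prod_(j <- s | j != x) c j = \prod_(j <- s) c j.
  rewrite big_seq_cond [RHS]big_seq; apply: eq_bigl => j.
  by case: eqP => [->|]; rewrite ?(negbTE xNs) ?andbT.
have keep_x : \sum_(i <- s) \prod_(j <- x :: s | j != i) c j =
              c x * \sum_(i <- s) \prod_(j <- s | j != i) c j.
  rewrite big_distrr /= !big_seq; apply: eq_bigr => i iS.
  by rewrite big_cons; case: eqP => // xi; rewrite xi iS in xNs.
exists (c x * W + \sum_(i <- s) \prod_(j <- s | j != i) c j + z * W).
by rewrite !big_cons eqxx /= drop_x keep_x HW; ring.
Qed.

Lemma sqr_dvdn_mulD P y : P %| y -> P ^ 2 %| y * (y + P).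
Proof. by case/dvdnP=> t ->; rewrite -mulSnr mulnACA dvdn_mull. Qed.

Definition pfree_prod (p x L : nat) := \prod_(i < L | ~~ (p %| i)) (x + i).

Lemma pfree_prodD p x L K : p %| L ->
  pfree_prod p x (L + K) = pfree_prod p x L * pfree_prod p (x + L) K.
Proof.
move=> pL; rewrite /pfree_prod big_split_ord /=; congr (_ * _).
by apply: eq_big => [i|i _] /=; [rewrite dvdn_addr | rewrite addnA].
Qed.

Lemma pfree_prod_blocks p x P m : p %| P ->
  pfree_prod p x (m * P) = \prod_(b < m) pfree_prod p (x + b * P) P.
Proof.
move=> pP; elim: m => [|m IH]; first by rewrite /pfree_prod !big_ord0.
by rewrite mulSn addnC pfree_prodD ?dvdn_mull // IH big_ord_recr.
Qed.

Lemma pfree_prod0_gt0 p L : 0 < p -> 0 < pfree_prod p 0 L.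
Proof.
move=> p0; apply: prodn_cond_gt0 => i; rewrite add0n lt0n.
by apply: contra => /eqP->.
Qed.

Lemma pfree_prod0_ndvd p L : prime p -> ~~ (p %| pfree_prod p 0 L).
Proof.
move=> pp; apply: (big_ind (fun x => ~~ (p %| x))) => [|x y|i] //.
- by rewrite Euclid_dvd1.
- by rewrite Euclid_dvdM // negb_or => -> ->.
Qed.

Lemma fact_addn x L : (x + L)`! = x`! * \prod_(i < L) (x + i.+1).
Proof.
elim: L => [|L IH]; first by rewrite big_ord0 addn0 muln1.
by rewrite big_ord_recr addnS factS IH /=; ring.
Qed.

Lemma prod_period_pfree p x : 0 < p ->
  \prod_(i < p) (x + i.+1) = (x + p) * pfree_prod p x p.
Proof.
case: p => // p _; rewrite big_ord_recr /= mulnC; congr (_ * _).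
rewrite /pfree_prod [in RHS]big_mkcond [in RHS]big_ord_recl /=.
rewrite mul1n -big_mkcond /=; apply/esym/eq_big => [i|i _]; rewrite /bump add1n //.
by apply/negP => /(dvdn_leq (ltn0Sn _)); rewrite ltnS leqNgt ltn_ord.
Qed.

Lemma fact_pmul p N : 0 < p -> (p * N)`! = p ^ N * N`! * pfree_prod p 0 (p * N).
Proof.
move=> p0; elim: N => [|N IH]; first by rewrite muln0 /pfree_prod big_ord0.
rewrite mulnS addnC fact_addn prod_period_pfree // IH pfree_prodD ?dvdn_mulr //.
by rewrite add0n expnS factS; ring.
Qed.

Lemma bin_pmul p N M : 0 < p -> M <= N ->
  'C(p * N, p * M) * pfree_prod p 0 (p * M) =
  'C(N, M) * pfree_prod p (p * (N - M)) (p * M).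
Proof.
move=> p0 le_MN; set D := N - M.
have eN : N = D + M by rewrite subnK.
have eC : 'C(p * N, p * M) * ((p * M)`! * (p * D)`!) = (p * N)`!.
  by rewrite /D mulnBr bin_fact // leq_mul2l le_MN orbT.
have eF : 'C(N, M) * (M`! * D`!) = N`! by rewrite bin_fact.
have eU : pfree_prod p 0 (p * N) =
           pfree_prod p 0 (p * D) * pfree_prod p (p * D) (p * M).
  by rewrite eN mulnDr pfree_prodD ?dvdn_mulr.
move: eC; rewrite !fact_pmul // -eF eU eN expnD => eC.
apply/eqP; rewrite -(@eqn_pmul2l (p ^ D * p ^ M * (M`! * D`!) * pfree_prod p 0 (p * D))).
  by apply/eqP; apply: etrans (etrans _ eC) _; ring.
by rewrite !muln_gt0 !expn_gt0 p0 !fact_gt0 pfree_prod0_gt0.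
Qed.

Lemma pfree_prod_mod_period p P y : P %| y ->
  pfree_prod p y P = pfree_prod p 0 P %[mod P].
Proof. by move=> Py; apply: eq_modn_prod => i _; rewrite -modnDml (eqP Py). Qed.

Lemma pfree_prod_periodic_mod p x P m q : p %| P -> P %| x ->
  (forall y, P %| y -> pfree_prod p y P = pfree_prod p 0 P %[mod q]) ->
  pfree_prod p x (m * P) = pfree_prod p 0 P ^ m %[mod q].
Proof.
move=> pP Px period.
rewrite pfree_prod_blocks // -[m in RHS]card_ord -prod_nat_const.
by apply: eq_modn_prod => b _; apply: period; rewrite dvdn_add ?dvdn_mull.
Qed.

Lemma bin_pexpS_mod p r n m q : prime p ->
  (forall y, p ^ r.+1 %| y ->
     pfree_prod p y (p ^ r.+1) = pfree_prod p 0 (p ^ r.+1) %[mod p ^ q]) ->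
  'C(n * p ^ r.+1, m * p ^ r.+1) = 'C(n * p ^ r, m * p ^ r) %[mod p ^ q].
Proof.
move=> pp period; have p0 := prime_gt0 pp.
have [le_mn|lt_nm] := leqP m n; last by rewrite !bin_small ?ltn_pmul2r ?expn_gt0 ?p0.
have eP k : k * p ^ r.+1 = p * (k * p ^ r) by rewrite expnS; ring.
have pP : p %| p ^ r.+1 by rewrite expnS dvdn_mulr.
have := bin_pmul p0 (leq_mul le_mn (leqnn (p ^ r))); rewrite -!eP -mulnBl -eP => e.
have := coprime_pexp_ndvd q pp (pfree_prod0_ndvd (m * p ^ r.+1) pp).
move/eq_modn_mulr_coprime; apply.
rewrite e -modnMmr pfree_prod_periodic_mod ?dvdn_mull // modnMmr.
by rewrite -modnMmr -(pfree_prod_periodic_mod _ pP (dvdn0 _) period) modnMmr.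
Qed.

Lemma pfree_prod_sqr p P y : p %| P ->
  pfree_prod p y P ^ 2 = \prod_(i < P | ~~ (p %| i)) (i * (P - i) + y * (y + P)).
Proof.
move=> pP; rewrite /pfree_prod -(big_mkord (fun i => ~~ (p %| i)) (fun i => y + i)).
rewrite -(big_mkord (fun i => ~~ (p %| i)) (fun i => i * (P - i) + y * (y + P))).
case: P pP => [|P] pP; first by rewrite !big_geq.
rewrite big_ltn_cond // [in RHS]big_ltn_cond // dvdn0 /= expnS expn1 {2}big_nat_rev.
rewrite [X in _ * X = _](congr_big_nat 1 P.+1 (fun i => ~~ (p %| i))
                                     (fun i => y + (P.+1 - i))) //.
- rewrite -big_split big_nat_cond [RHS]big_nat_cond /=.
  apply: eq_bigr => i /andP[/andP[_ iP] _].
  by rewrite -[in y + P.+1](subnK (ltnW iP)); ring.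
- by move=> i /andP[_ iP]; rewrite add1n subSS dvdn_subr ?(ltnW iP).
Qed.

Definition pfree_linear_coef p P :=
  \sum_(i < P | ~~ (p %| i)) \prod_(j < P | ~~ (p %| j) && (j != i)) (j * (P - j)).

Lemma pfree_prod_sqr_expansion p P y : p %| P -> exists W,
  pfree_prod p y P ^ 2 =
  pfree_prod p 0 P ^ 2 + y * (y + P) * (pfree_linear_coef p P + y * (y + P) * W).
Proof.
move=> pP; rewrite !pfree_prod_sqr //.
have := filter_uniq (fun i : 'I_P => ~~ (p %| i)) (index_enum_uniq 'I_P).
move=> /(prod_addn_expansion (fun i : 'I_P => i * (P - i)) (y * (y + P)))[W expand].
exists W; move: expand; rewrite /pfree_linear_coef !big_filter => ->.
rewrite [in RHS](eq_bigr (fun i : 'I_P => i * (P - i))) => [|i _]; last first.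
  by rewrite mul0n addn0.
under [in X in y * (y + P) * X]eq_bigr do rewrite big_filter_cond.
ring.
Qed.

Section DoublingMap.

Variables p r : nat.
Hypotheses (p_prime : prime p) (p_gt3 : 3 < p) (r_gt0 : 0 < r).
Local Notation P := (p ^ r).

Let P_gt0 : 0 < P. Proof. by rewrite expn_gt0 prime_gt0. Qed.
Let p_dvd_P : p %| P. Proof. by rewrite -(prednK r_gt0) expnS dvdn_mulr. Qed.
Let coprime_P x : ~~ (p %| x) -> coprime x P. Proof. exact: coprime_pexp_ndvd. Qed.
Let small_ndvd x : 0 < x < p -> ~~ (p %| x).
Proof. by case/andP=> x0 xp; apply/negP => /(dvdn_leq x0); rewrite leqNgt xp. Qed.
Let p_ndvd2 : ~~ (p %| 2). Proof. by apply: small_ndvd; rewrite /= ltnW. Qed.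
Let coprime_2P : coprime 2 P. Proof. exact: coprime_P. Qed.
Let coprime_3P : coprime 3 P. Proof. by rewrite coprime_P ?small_ndvd. Qed.

Let dbl (i : 'I_P) : 'I_P := Ordinal (ltn_pmod (2 * i) P_gt0).

Let dbl_mod i : dbl i = 2 * i %[mod P]. Proof. exact: modn_mod. Qed.

Let dbl_inj : injective dbl.
Proof.
move=> i j /(congr1 val) /= eq_ij; apply: val_inj.
have : (i : nat) = j %[mod P].
  by apply: (eq_modn_mulr_coprime coprime_2P); rewrite ![_ * 2]mulnC.
by rewrite !modn_small.
Qed.

Let pfree_dbl i : ~~ (p %| dbl i) = ~~ (p %| i).
Proof.
by rewrite /dvdn /= (modn_dvdm _ p_dvd_P) -/(dvdn _ _) Euclid_dvdM // negb_or p_ndvd2.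
Qed.

Let prod_pfree_two : \prod_(i < P | ~~ (p %| i)) 2 = 1 %[mod P].
Proof.
have coprime_G : coprime (\prod_(i < P | ~~ (p %| i)) (i : nat)) P.
  apply: (big_ind (fun x => coprime x P)) => [|x y|i /coprime_P //].
  - exact: coprime1n.
  - by rewrite coprimeMl => -> ->.
apply: (eq_modn_mulr_coprime coprime_G); rewrite mul1n -big_split /=.
rewrite [in RHS](reindex_inj dbl_inj) /= (eq_bigl _ _ pfree_dbl).
by apply: eq_modn_prod => i _; rewrite dbl_mod.
Qed.

Let dbl_factor j : dbl j * (P - dbl j) = 4 * (j * (P - j)) %[mod P].
Proof.
have le_dblP : (dbl j : nat) <= P by apply: ltnW.
have le_jP : (j : nat) <= P by apply: ltnW.
have sq_dbl : dbl j * dbl j = 4 * (j * j) %[mod P].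
  by rewrite -modnMm dbl_mod modnMm; congr (_ %% _); ring.
apply/eqP; rewrite -(eqn_modDr (dbl j * dbl j)) -mulnDr subnK //.
rewrite -modnDmr sq_dbl modnDmr -mulnDr -mulnDr subnK // modnMl.
by rewrite mulnA modnMl.
Qed.

Lemma dvdn_pfree_linear_coef : P %| pfree_linear_coef p P.
Proof.
set T := pfree_linear_coef p P.
have T_dbl : T = \sum_(i < P | ~~ (p %| i))
                   \prod_(j < P | ~~ (p %| j) && (j != i)) (4 * (j * (P - j))) %[mod P].
  rewrite /T /pfree_linear_coef (reindex_inj dbl_inj) /= (eq_bigl _ _ pfree_dbl).
  apply: eq_modn_sum => i _; rewrite (reindex_inj dbl_inj) /=.
  rewrite (eq_bigl (fun j : 'I_P => ~~ (p %| j) && (j != i))) => [|j]; last first.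
    by rewrite pfree_dbl (inj_eq dbl_inj).
  by apply: eq_modn_prod => j _; apply: dbl_factor.
have prod4 : \prod_(j < P | ~~ (p %| j)) 4 = 1 %[mod P].
  by rewrite (_ : 4 = 2 * 2) // big_split -modnMm prod_pfree_two modnMm.
have T4 : 4 * T = \prod_(j < P | ~~ (p %| j)) 4 * T %[mod P].
  rewrite -modnMmr T_dbl modnMmr /T /pfree_linear_coef !big_distrr /=.
  congr (_ %% _); apply: eq_bigr => i pfree_i.
  by rewrite big_split /= (bigD1 i pfree_i) /= mulnA.
have : P %| 4 * T - T.
  by rewrite -eqn_mod_dvd ?leq_pmull // T4 -modnMml prod4 modnMml mul1n.
by rewrite -[4]/(3.+1) mulSn addKn Gauss_dvdr // coprime_sym.
Qed.

End DoublingMap.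

Lemma pfree_prod_sqr_mod_sqr p P y : p %| P -> P %| y ->
  pfree_prod p y P ^ 2 = pfree_prod p 0 P ^ 2 %[mod P ^ 2].
Proof.
move=> pP Py; have [W ->] := pfree_prod_sqr_expansion y pP.
by rewrite modn_addr_dvd // dvdn_mulr // sqr_dvdn_mulD.
Qed.

Lemma pfree_prod_sqr_mod_cube p P y :
  p %| P -> P %| y -> P %| pfree_linear_coef p P ->
  pfree_prod p y P ^ 2 = pfree_prod p 0 P ^ 2 %[mod P ^ 3].
Proof.
move=> pP Py P_coef; have [W ->] := pfree_prod_sqr_expansion y pP.
rewrite modn_addr_dvd // (expnS P 2) mulnC dvdn_mul ?sqr_dvdn_mulD //.
by rewrite dvdn_add // dvdn_mulr // dvdn_mulr.
Qed.

Lemma pfree_prod_pexp_mod_odd p r y : prime p -> 2 < p -> 0 < r -> p ^ r %| y ->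
  pfree_prod p y (p ^ r) = pfree_prod p 0 (p ^ r) %[mod p ^ (2 * r)].
Proof.
move=> pp p_gt2 r_gt0 Py.
have pP : p %| p ^ r by rewrite -(prednK r_gt0) expnS dvdn_mulr.
apply: eq_modn_sqr_odd p_gt2 (pfree_prod0_ndvd _ pp) _ _ => //.
  exact: eq_modn_dvd (pfree_prod_mod_period p Py) pP.
by rewrite mulnC expnM pfree_prod_sqr_mod_sqr.
Qed.

Lemma pfree_prod_pexp_mod_ge5 p r y : prime p -> 3 < p -> 0 < r -> p ^ r %| y ->
  pfree_prod p y (p ^ r) = pfree_prod p 0 (p ^ r) %[mod p ^ (3 * r)].
Proof.
move=> pp p_gt3 r_gt0 Py.
have pP : p %| p ^ r by rewrite -(prednK r_gt0) expnS dvdn_mulr.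
apply: eq_modn_sqr_odd (ltnW p_gt3) (pfree_prod0_ndvd _ pp) _ _ => //.
  exact: eq_modn_dvd (pfree_prod_mod_period p Py) pP.
by rewrite mulnC expnM pfree_prod_sqr_mod_cube // dvdn_pfree_linear_coef.
Qed.

Lemma pfree_prod_pexp_mod_two r y : 0 < r -> 2 ^ r %| y ->
  pfree_prod 2 y (2 ^ r) = pfree_prod 2 0 (2 ^ r) %[mod 2 ^ (2 * r).-1].
Proof.
move=> r_gt0 Py; have period := pfree_prod_mod_period 2 Py.
case: r r_gt0 Py period => [//|[_ _ period|r _ Py period]]; first exact: period.
apply: eq_modn_sqr_two.
- by have := pfree_prod0_ndvd (2 ^ r.+2) (isT : prime 2); rewrite dvdn2 negbK.
- by apply: eq_modn_dvd period _; rewrite !expnS mulnA dvdn_mulr.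
- rewrite -[(2 * _).-1.+1]/(2 * r.+2) mulnC expnM.
  by rewrite pfree_prod_sqr_mod_sqr // expnS dvdn_mulr.
Qed.

Lemma bin_pexp_addn_mod p k n m n0 m0 : prime p -> n0 < p -> m0 < p ->
  'C(n * p ^ k + n0, m * p ^ k + m0) =
  'C(n * p ^ k, m * p ^ k) * 'C(n0, m0) %[mod p ^ k].
Proof.
move=> pp n0p m0p; case: k => [|k]; first by rewrite !modn1.
set A := n * _; set B := m * _; have pB : p %| B by rewrite /B expnS mulnCA dvdn_mulr.
rewrite addnC -Vandermonde (bigD1 (Ordinal (leq_addl B m0 : m0 < (B + m0).+1))) //=.
rewrite addnK mulnC modn_addr_dvd //; apply: dvdn_sum => j /eqP ne_jm0.
have [lt_n0j|le_jn0] := ltnP n0 j; first by rewrite bin_small.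
apply/dvdn_mull/dvdn_bin_coprime; first by rewrite /A dvdn_mull.
apply/coprime_pexp_ndvd/ndvdn_addn_subn => //; first exact: leq_ltn_trans n0p.
  by rewrite -ltnS.
by apply/eqP => eq_jm0; apply/ne_jm0/val_inj.
Qed.

Lemma bin_pexp_descent p n m j d q :
  (forall r, j <= r < j + d ->
     'C(n * p ^ r.+1, m * p ^ r.+1) = 'C(n * p ^ r, m * p ^ r) %[mod q]) ->
  'C(n * p ^ (j + d), m * p ^ (j + d)) = 'C(n * p ^ j, m * p ^ j) %[mod q].
Proof.
elim: d => [|d IH] step; first by rewrite addn0.
rewrite addnS step; last by rewrite leq_addr addnS ltnSn.
rewrite IH // => r /andP[jr rd].
by apply: step; rewrite jr addnS ltnS (ltnW rd).
Qed.

Lemma bin_pexp_reduce p k j n m n0 m0 (e : nat -> nat) :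
  prime p -> j <= k -> n0 < p -> m0 < p ->
  (forall r, j <= r < k -> k <= e r) ->
  (forall r y, p ^ r.+1 %| y ->
     pfree_prod p y (p ^ r.+1) = pfree_prod p 0 (p ^ r.+1) %[mod p ^ e r]) ->
  'C(n * p ^ k + n0, m * p ^ k + m0) =
  'C(n * p ^ j, m * p ^ j) * 'C(n0, m0) %[mod p ^ k].
Proof.
move=> pp le_jk n0p m0p e_ge period.
rewrite bin_pexp_addn_mod // -modnMml -(subnKC le_jk) bin_pexp_descent ?modnMml //.
move=> r jrk; apply: eq_modn_dvd (bin_pexpS_mod n m pp (period r)) _.
by rewrite subnKC // in jrk *; apply/dvdn_exp2l/e_ge.
Qed.

Unset Implicit Arguments.

Theorem mainTheorem1 (p k n m n0 m0 : nat) :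
  prime p -> 1 <= k -> n0 <= p - 1 -> m0 <= p - 1 ->
  [/\ (5 <= p ->
        'C(n * p ^ k + n0, m * p ^ k + m0)
        = 'C(n * p ^ ((k - 1) %/ 3), m * p ^ ((k - 1) %/ 3)) * 'C(n0, m0)
          %[mod p ^ k]),
      (p = 2 ->
        'C(n * 2 ^ k + n0, m * 2 ^ k + m0)
        = 'C(n * 2 ^ (k %/ 2), m * 2 ^ (k %/ 2)) * 'C(n0, m0) %[mod 2 ^ k])
    & (p = 3 ->
        'C(n * 3 ^ k + n0, m * 3 ^ k + m0)
        = 'C(n * 3 ^ ((k - 1) %/ 2), m * 3 ^ ((k - 1) %/ 2)) * 'C(n0, m0)
          %[mod 3 ^ k])].
Proof.
move=> pp k_gt0 le_n0p le_m0p; have p_gt0 := prime_gt0 pp.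
have n0p : n0 < p by lia.
have m0p : m0 < p by lia.
split=> [p_ge5|p2|p3].
- apply: (bin_pexp_reduce n m (e := fun r => 3 * r.+1)) => // [||r y]; try lia.
  exact: pfree_prod_pexp_mod_ge5 pp (ltnW p_ge5) (ltn0Sn r).
- subst p; apply: (bin_pexp_reduce n m (e := fun r => (2 * r.+1).-1)) => // [||r y]; try lia.
  exact: pfree_prod_pexp_mod_two (ltn0Sn r).
- subst p; apply: (bin_pexp_reduce n m (e := fun r => 2 * r.+1)) => // [||r y]; try lia.
  exact: pfree_prod_pexp_mod_odd (isT : prime 3) (isT : 2 < 3) (ltn0Sn r).
Qed.
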